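(* $u(4,8)=3$ and $\varepsilon(4,8)=4$.
   Context: All matrices are binary. For a nonempty set $S$ of columns of a binary matrix, let $z$ be the sum over the integers of the columns in $S$. $S$ is called $1$-free if no entry of $z$ equals $1$, and even if all entries of $z$ are even. For a binary $m\times n$ matrix $A$ with $m<n$: $\varepsilon(A)$ is the smallest cardinality of a nonempty even set of columns, and $u(A)$ the smallest cardinality of a nonempty $1$-free set of columns. For $m<n$, $\varepsilon(m,n)$ and $u(m,n)$ are the maxima of $\varepsilon(A)$, resp. $u(A)$, over all binary $m\times n$ matrices. *)

From mathcomp Require Import all_boot all_algebra.
Set Implicit Arguments. Unset Strict Implicit. Unset Printing Implicit Defensive.

Definition colsum (m n : nat) (A : 'M[bool]_(m, n)) (S : {set 'I_n}) (i : 'I_m) : nat :=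
  #|[set j in S | A i j]|.

Definition even_set (m n : nat) (A : 'M[bool]_(m, n)) (S : {set 'I_n}) : bool :=
  (S != set0) && [forall i, ~~ odd (colsum A S i)].

Definition onefree_set (m n : nat) (A : 'M[bool]_(m, n)) (S : {set 'I_n}) : bool :=
  (S != set0) && [forall i, colsum A S i != 1%N].

Definition is_min_size (n : nat) (P : {set 'I_n} -> bool) (k : nat) : Prop :=
  (exists S, P S /\ #|S| = k) /\ (forall S, P S -> k <= #|S|).

Definition eps_of (m n : nat) (A : 'M[bool]_(m, n)) (k : nat) : Prop :=
  is_min_size (even_set A) k.
Definition u_of (m n : nat) (A : 'M[bool]_(m, n)) (k : nat) : Prop :=
  is_min_size (onefree_set A) k.

Definition is_max_over (m n : nat) (f : 'M[bool]_(m, n) -> nat -> Prop) (k : nat) : Prop :=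
  (exists A, f A k) /\ (forall A v, f A v -> v <= k).

Definition eps_mn (m n k : nat) : Prop := is_max_over (@eps_of m n) k.
Definition u_mn (m n k : nat) : Prop := is_max_over (@u_of m n) k.

From mathcomp Require Import all_boot all_algebra.

Set Implicit Arguments.
Unset Strict Implicit.
Unset Printing Implicit Defensive.

(* A zero column, or two equal columns, already form an even (hence 1-free)
   set of size at most 2.  Otherwise the 8 columns are distinct nonzero
   vectors of {0,1}^4, and an exhaustive search over the 6435 eight-element
   sets of such vectors finds a 1-free subset of size at most 3 and an even
   subset of size at most 4 in each.  The extremal matrix has as columns the
   four unit vectors and the four vectors of weight 3: every sum of two of its
   columns has weight 2, so no three columns sum to 0 modulo 2, and two
   distinct columns differ in some row, where they sum to 1. *)

Fixpoint bitseqs (n : nat) : seq bitseq :=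
  if n is n'.+1 then [seq b :: s | b <- [:: true; false], s <- bitseqs n']
  else [:: [::]].

Lemma mem_bitseqs (s : bitseq) : s \in bitseqs (size s).
Proof.
by elim: s => //= b s IHs; case: b; rewrite !mem_cat (map_f (cons _)) ?orbT.
Qed.

Lemma bitseqs_uniq n : uniq (bitseqs n).
Proof.
elim: n => // n IHn.
by apply: (allpairs_uniq (f := fun b s => b :: s)) => // -[b s] [c t] _ _ [-> ->].
Qed.

Definition subseqs (T : Type) (s : seq T) : seq (seq T) :=
  [seq mask m s | m <- bitseqs (size s)].

Lemma mem_subseqs (T : eqType) (s t : seq T) : (t \in subseqs s) = subseq t s.
Proof.
apply/idP/idP => [/mapP [m _ ->] | /subseqP [m sz_m ->]]; first exact: mask_subseq.
by apply: map_f; rewrite -sz_m mem_bitseqs.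
Qed.

Definition nonzero_vectors (m : nat) : seq bitseq :=
  [seq v <- bitseqs m | v != nseq m false].

(* List counterparts of [colsum], [onefree_set] and [even_set], a column being
   the [bitseq] of its entries: unlike finsets and matrices (whose constructors
   are locked) they reduce under [vm_compute]. *)
Definition row_count (i : nat) (t : seq bitseq) : nat := count (nth false ^~ i) t.

Definition onefree_cols (m : nat) (t : seq bitseq) : bool :=
  all (fun i => row_count i t != 1) (iota 0 m).

Definition even_cols (m : nat) (t : seq bitseq) : bool :=
  all (fun i => ~~ odd (row_count i t)) (iota 0 m).

Lemma onefree_cols_perm m (t t' : seq bitseq) :
  perm_eq t t' -> onefree_cols m t = onefree_cols m t'.
Proof. by move=> pt; apply: eq_all => i; rewrite /row_count (permP pt). Qed.

Lemma even_cols_perm m (t t' : seq bitseq) :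
  perm_eq t t' -> even_cols m t = even_cols m t'.
Proof. by move=> pt; apply: eq_all => i; rewrite /row_count (permP pt). Qed.

Lemma forall_ord_iota m (P : pred nat) : [forall i : 'I_m, P i] = all P (iota 0 m).
Proof.
rewrite -val_enum_ord all_map; apply/forallP/allP => [P_m i _ | P_m i]; first exact: P_m.
by apply: P_m; rewrite mem_enum.
Qed.

Section Columns.

Variables (m n : nat) (A : 'M[bool]_(m, n)).

Definition column (j : 'I_n) : bitseq := [seq A i j | i <- enum 'I_m].

Lemma nth_column j (i : 'I_m) : nth false (column j) i = A i j.
Proof. by rewrite (nth_map i) ?size_enum_ord // nth_ord_enum. Qed.

Lemma size_column j : size (column j) = m.
Proof. by rewrite size_map size_enum_ord. Qed.

Section ColumnList.

Variable idx : seq 'I_n.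
Hypothesis idx_uniq : uniq idx.

Lemma card_set_seq : #|[set j in idx]| = size idx.
Proof. by rewrite cardsE; apply/card_uniqP. Qed.

Lemma colsum_seq (i : 'I_m) : colsum A [set j in idx] i = row_count i (map column idx).
Proof.
rewrite /colsum /row_count count_map (eq_count (a2 := A i)) => [|j]; last first.
  by rewrite /= nth_column.
rewrite -size_filter -(elimT card_uniqP (filter_uniq (A i) idx_uniq)).
by apply: eq_card => j; rewrite !inE mem_filter andbC.
Qed.

Lemma onefree_set_seqE :
  onefree_set A [set j in idx] = (0 < size idx) && onefree_cols m (map column idx).
Proof.
rewrite /onefree_set /onefree_cols -card_gt0 card_set_seq -forall_ord_iota.
by congr andb; apply: eq_forallb => i; rewrite colsum_seq.
Qed.

Lemma even_set_seqE :
  even_set A [set j in idx] = (0 < size idx) && even_cols m (map column idx).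
Proof.
rewrite /even_set /even_cols -card_gt0 card_set_seq -forall_ord_iota.
by congr andb; apply: eq_forallb => i; rewrite colsum_seq.
Qed.

End ColumnList.

Lemma even_set_onefree S : even_set A S -> onefree_set A S.
Proof.
case/andP=> nonempty /forallP even_S; rewrite /onefree_set nonempty.
by apply/forallP => i; apply: contraNneq (even_S i) => ->.
Qed.

Lemma small_even_set_or_distinct_nonzero_columns :
  (exists2 S, even_set A S & #|S| <= 2) \/
  injective column /\ forall j, column j != nseq m false.
Proof.
have even_row_count i (t : seq bitseq) : ~~ odd (row_count i (t ++ t)).
  by rewrite /row_count count_cat oddD addbb.
case: (pickP (fun j => column j == nseq m false)) => [j /eqP zero_j | nonzero].
  left; exists [set k in [:: j]]; rewrite ?card_set_seq //.
  rewrite even_set_seqE //=; apply/allP => i _.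
  by rewrite /row_count /= zero_j nth_nseq if_same.
case: (pickP [pred p : 'I_n * 'I_n | (p.1 != p.2) && (column p.1 == column p.2)]).
  move=> [j k] /andP [/= neq_jk /eqP eq_jk]; left.
  exists [set l in [:: j; k]]; rewrite ?card_set_seq //= ?inE ?neq_jk //.
  rewrite even_set_seqE /= ?inE ?neq_jk //; apply/allP => i _.
  by have := even_row_count i [:: column k]; rewrite eq_jk.
move=> distinct; right; split=> [j k eq_jk | j]; last by rewrite nonzero.
by apply/eqP; apply: contraFT (distinct (j, k)) => /= ->; rewrite eq_jk eqxx.
Qed.

Lemma realize_columns (t : seq bitseq) :
  injective column -> uniq t -> {subset t <= codom column} ->
  exists2 idx : seq 'I_n, uniq idx & perm_eq (map column idx) t.
Proof.
move=> inj t_uniq t_sub; exists [seq j <- enum 'I_n | column j \in t].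
  by rewrite filter_uniq ?enum_uniq.
apply: uniq_perm => //; first by rewrite map_inj_uniq // filter_uniq ?enum_uniq.
move=> v; apply/idP/idP => [/mapP [j] | v_t].
  by rewrite mem_filter => /andP [? _] ->.
have /codomP [j v_j] := t_sub v v_t.
by rewrite v_j map_f // mem_filter -v_j v_t mem_enum.
Qed.

Lemma distinct_columns_realize (Q : pred (seq bitseq)) :
  injective column -> (forall j, column j != nseq m false) ->
  {in [seq c <- subseqs (nonzero_vectors m) | size c == n], forall c, has Q (subseqs c)} ->
  exists2 t, Q t & exists2 idx : seq 'I_n, uniq idx & perm_eq (map column idx) t.
Proof.
move=> inj nonzero Q_sub.
set c := [seq v <- nonzero_vectors m | v \in codom column].
have c_uniq : uniq c by rewrite !filter_uniq ?bitseqs_uniq.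
have c_codom : perm_eq c (codom column).
  apply: uniq_perm => //; first by rewrite map_inj_uniq ?enum_uniq.
  move=> v; rewrite mem_filter andb_idr // => /codomP [j ->].
  by rewrite mem_filter nonzero -(size_column j) mem_bitseqs.
have /Q_sub /hasP [t] : c \in [seq c <- subseqs (nonzero_vectors m) | size c == n].
  by rewrite mem_filter (perm_size c_codom) size_codom card_ord eqxx mem_subseqs filter_subseq.
rewrite mem_subseqs => sub_t Q_t; exists t => //.
apply: realize_columns => // [|v /(mem_subseq sub_t)]; first exact: subseq_uniq c_uniq.
by rewrite (perm_mem c_codom).
Qed.

Lemma columns_subseq (S : {set 'I_n}) :
  subseq (map column (enum S)) (map column (enum 'I_n)).
Proof. by apply: map_subseq; rewrite enumT /enum_mem filter_subseq. Qed.

End Columns.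

Definition matrix_of_columns m n (cs : seq bitseq) : 'M[bool]_(m, n) :=
  \matrix_(i, j) nth false (nth [::] cs j) i.

Lemma columns_matrix_of_columns m n (cs : seq bitseq) :
  size cs = n -> all (fun v => size v == m) cs ->
  map (column (matrix_of_columns m n cs)) (enum 'I_n) = cs.
Proof.
move=> size_cs /allP size_v.
rewrite -[RHS](mkseq_nth [::]) size_cs /mkseq -val_enum_ord -map_comp.
apply: eq_map => j /=; rewrite /column; under eq_map do rewrite mxE.
have /eqP sz : size (nth [::] cs j) == m by apply: size_v; rewrite mem_nth ?size_cs.
by rewrite -[RHS](mkseq_nth false) sz /mkseq -val_enum_ord -map_comp.
Qed.

Lemma is_max_over_min_size m n (P : 'M[bool]_(m, n) -> pred {set 'I_n}) A0 k :
  (forall A, exists2 S, P A S & #|S| <= k) -> (forall S, P A0 S -> k <= #|S|) ->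
  is_max_over (fun A => is_min_size (P A)) k.
Proof.
move=> upper lower; split=> [|A v [_ min_v]].
  exists A0; split=> //; have [S P_S small_S] := upper A0.
  by exists S; split=> //; apply/eqP; rewrite eqn_leq small_S lower.
by have [S P_S small_S] := upper A; apply: leq_trans (min_v S P_S) small_S.
Qed.

Lemma small_onefree_subset_search :
  all (fun c => has (fun t => (0 < size t <= 3) && onefree_cols 4 t) (subseqs c))
      [seq c <- subseqs (nonzero_vectors 4) | size c == 8].
Proof. by vm_compute. Qed.

Lemma small_even_subset_search :
  all (fun c => has (fun t => (0 < size t <= 4) && even_cols 4 t) (subseqs c))
      [seq c <- subseqs (nonzero_vectors 4) | size c == 8].
Proof. by vm_compute. Qed.

Lemma onefree_set_upper (A : 'M[bool]_(4, 8)) : exists2 S, onefree_set A S & #|S| <= 3.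
Proof.
have [[S even_S small_S] | [inj nonzero]] := small_even_set_or_distinct_nonzero_columns A.
  by exists S; [exact: even_set_onefree | exact: leq_trans small_S _].
have [t /andP [/andP [t_gt0 t_le3] onefree_t] [idx idx_uniq perm_t]] :=
  distinct_columns_realize inj nonzero (allP small_onefree_subset_search).
have size_idx : size idx = size t by rewrite -(size_map (column A)) (perm_size perm_t).
exists [set j in idx]; last by rewrite card_set_seq // size_idx.
by rewrite onefree_set_seqE // (onefree_cols_perm _ perm_t) size_idx t_gt0.
Qed.

Lemma even_set_upper (A : 'M[bool]_(4, 8)) : exists2 S, even_set A S & #|S| <= 4.
Proof.
have [[S even_S small_S] | [inj nonzero]] := small_even_set_or_distinct_nonzero_columns A.
  by exists S; last exact: leq_trans small_S _.
have [t /andP [/andP [t_gt0 t_le4] even_t] [idx idx_uniq perm_t]] :=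
  distinct_columns_realize inj nonzero (allP small_even_subset_search).
have size_idx : size idx = size t by rewrite -(size_map (column A)) (perm_size perm_t).
exists [set j in idx]; last by rewrite card_set_seq // size_idx.
by rewrite even_set_seqE // (even_cols_perm _ perm_t) size_idx t_gt0.
Qed.

Definition extremal_columns : seq bitseq :=
  [:: [:: true; false; false; false]; [:: false; true; false; false];
      [:: false; false; true; false]; [:: false; false; false; true];
      [:: false; true; true; true]; [:: true; false; true; true];
      [:: true; true; false; true]; [:: true; true; true; false]].

Definition extremal_matrix : 'M[bool]_(4, 8) := matrix_of_columns 4 8 extremal_columns.

Lemma extremal_matrix_columns : map (column extremal_matrix) (enum 'I_8) = extremal_columns.
Proof. exact: columns_matrix_of_columns. Qed.

Lemma extremal_onefree_search :
  all (fun t => (0 < size t) && onefree_cols 4 t ==> (3 <= size t)) (subseqs extremal_columns).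
Proof. by vm_compute. Qed.

Lemma extremal_even_search :
  all (fun t => (0 < size t) && even_cols 4 t ==> (4 <= size t)) (subseqs extremal_columns).
Proof. by vm_compute. Qed.

Lemma extremal_columns_subseqs (S : {set 'I_8}) :
  map (column extremal_matrix) (enum S) \in subseqs extremal_columns.
Proof. by rewrite mem_subseqs -extremal_matrix_columns columns_subseq. Qed.

Lemma onefree_set_extremal S : onefree_set extremal_matrix S -> 3 <= #|S|.
Proof.
rewrite -(set_enum S) onefree_set_seqE ?enum_uniq // card_set_seq ?enum_uniq //.
rewrite -(size_map (column extremal_matrix)); apply/implyP.
exact: allP extremal_onefree_search _ (extremal_columns_subseqs S).
Qed.

Lemma even_set_extremal S : even_set extremal_matrix S -> 4 <= #|S|.
Proof.
rewrite -(set_enum S) even_set_seqE ?enum_uniq // card_set_seq ?enum_uniq //.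
rewrite -(size_map (column extremal_matrix)); apply/implyP.
exact: allP extremal_even_search _ (extremal_columns_subseqs S).
Qed.

Theorem theorem7p1 : u_mn 4 8 3 /\ eps_mn 4 8 4.
Proof.
split.
  exact: is_max_over_min_size onefree_set_upper onefree_set_extremal.
exact: is_max_over_min_size even_set_upper even_set_extremal.
Qed.
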